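(* Let $0\le\alpha\le1/4$, $\beta=(1-4\alpha)/2$, and let $\mathbf P_\alpha$ be the corner/stick law on $\mathbb Z^2$. If $1/8\le\alpha\le1/4$, then for every $A\subseteq\mathcal N_o$, $$\mathbf P_{1/2}[N(o)\cap A\neq\emptyset]\le \mathbf P_\alpha[N(o)\cap A\neq\emptyset],$$ where $\mathbf P_{1/2}$ is the local i.i.d. law with parameter $1/2$. Consequently $\mathbb P_{1/2}[o\rightsquigarrow\partial B_n]\le\mathbb P_\alpha[o\rightsquigarrow\partial B_n]$ for all $n$.
   Context: On $\mathbb Z^2$, $\mathcal N_o=\{\text{north},\text{south},\text{east},\text{west}\}$ (the four unit vectors). The corner/stick law $\mathbf P_\alpha$ is the law of a random 2-element subset $N(o)\subseteq\mathcal N_o$ that equals each of the four ''corner'' pairs $\{$north,east$\}$, $\{$north,west$\}$, $\{$south,east$\}$, $\{$south,west$\}$ with probability $\alpha$ and each of the two ''stick'' pairs $\{$north,south$\}$, $\{$east,west$\}$ with probability $\beta$, where $4\alpha+2\beta=1$. $\mathbf P_{1/2}$: each element of $\mathcal N_o$ is included independently with probability $1/2$. $\mathbb P_\alpha,\mathbb P_{1/2}$ are the product laws on $\mathbb Z^2$ (each vertex $u$ independently samples its translated set $N(u)$), defining a directed graph with edges $(u,v)$, $v\in N(u)$; $B_n=\{x:\|x\|_1\le n\}$, $\partial B_n=B_{n+1}\setminus B_n$, and $\{o\rightsquigarrow\partial B_n\}$ is the event that a directed path from the origin reaches $\partial B_n$. *)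

From HB Require Import structures.
From mathcomp Require Import all_boot all_order all_algebra.
From mathcomp Require Import boolp reals.
Set Implicit Arguments. Unset Strict Implicit. Unset Printing Implicit Defensive.
Import Order.TTheory GRing.Theory Num.Theory.
Local Open Scope ring_scope.

(** The four unit vectors of Z^2: the set N_o. *)
Inductive dir := North | South | East | West.

Definition dir_to_nat (d : dir) : nat :=
  match d with North => 0 | South => 1 | East => 2 | West => 3 end.
Definition nat_to_dir (n : nat) : option dir :=
  match n with 0 => Some North | 1 => Some South | 2 => Some East
             | 3 => Some West | _ => None end.
Lemma dir_natK : pcancel dir_to_nat nat_to_dir. Proof. by case. Qed.
HB.instance Definition _ := Countable.copy dir (pcan_type dir_natK).
Definition dir_enum := [:: North; South; East; West].
Lemma dir_enumP : Finite.axiom dir_enum. Proof. by case. Qed.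
HB.instance Definition _ := isFinite.Build dir dir_enumP.

Definition vtx := (int * int)%type.
Definition origin : vtx := (0, 0).
Definition dvec (d : dir) : vtx :=
  match d with North => (0, 1) | South => (0, -1)
             | East => (1, 0) | West => (-1, 0) end.
Definition vadd (u v : vtx) : vtx := (u.1 + v.1, u.2 + v.2).
Definition l1norm (u : vtx) : int := `|u.1| + `|u.2|.

Definition inB (n : nat) (x : vtx) : bool := l1norm x <= n%:Z.
Definition inDB (n : nat) (x : vtx) : bool := inB n.+1 x && ~~ inB n x.

Definition is_corner (S : {set dir}) : bool :=
  (S == [set North; East]) || (S == [set North; West]) ||
  (S == [set South; East]) || (S == [set South; West]).
Definition is_stick (S : {set dir}) : bool :=
  (S == [set North; South]) || (S == [set East; West]).

Definition beta_of {R : realType} (alpha : R) : R := (1 - 4 * alpha) / 2.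

Definition Pcs {R : realType} (alpha : R) (S : {set dir}) : R :=
  if is_corner S then alpha else if is_stick S then beta_of alpha else 0.

Definition Phalf {R : realType} (S : {set dir}) : R :=
  \prod_(d : dir) (if d \in S then 1 / 2 else 1 - 1 / 2).

Definition local_hit {R : realType} (P : {set dir} -> R) (A : {set dir}) : R :=
  \sum_(S : {set dir} | S :&: A != set0) P S.

(** Finite window: the box [-n,n]^2 (which contains B_n), indexed by
    'I_(2n+1) * 'I_(2n+1). *)
Definition box (n : nat) := ('I_(n.*2.+1) * 'I_(n.*2.+1))%type.
Definition box_pos (n : nat) (b : box n) : vtx :=
  ((b.1 : nat)%:Z - n%:Z, (b.2 : nat)%:Z - n%:Z).

(** A configuration on the box: each vertex u samples N(u) (as a set of
    directions; the actual out-neighbours are u + d, d in the set). *)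
Definition config (n : nat) := {ffun box n -> {set dir}}.

(** The sampled direction set at a vertex of Z^2 (empty outside the box;
    this value is never used by the event below). *)
Definition dirs_at (n : nat) (w : config n) (u : vtx) : {set dir} :=
  if [pick b : box n | box_pos b == u] is Some b then w b else set0.

Definition edge (n : nat) (w : config n) : rel vtx :=
  fun u v => [exists d in dirs_at w u, v == vadd u (dvec d)].

(** {o ~> dB_n}: a directed path from o reaching dB_n.  We describe it by
    its initial segment up to the first visit of dB_n: all earlier vertices
    lie in B_n (so only the configuration on B_n is consulted). *)
Definition reaches (n : nat) (w : config n) : Prop :=
  exists s : seq vtx,
    [/\ path (edge w) origin s,
        all (inB n) (belast origin s) &
        inDB n (last origin s)].

(** Product law restricted to the box (the finite-dimensional marginal of
    the product law on Z^2); it determines the probability of {o ~> dB_n}. *)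
Definition config_weight {R : realType} (P : {set dir} -> R) (n : nat)
  (w : config n) : R := \prod_(b : box n) P (w b).

Definition prob_reach {R : realType} (P : {set dir} -> R) (n : nat) : R :=
  \sum_(w : config n | `[< reaches w >]) config_weight P w.

From HB Require Import structures.
From mathcomp Require Import all_boot all_order all_algebra.
From mathcomp Require Import boolp reals.
From mathcomp Require Import lra zify.
Set Implicit Arguments.
Unset Strict Implicit.
Unset Printing Implicit Defensive.

Import Order.TTheory GRing.Theory Num.Theory.
Local Open Scope ring_scope.

(* The local comparison is a finite computation: P_{1/2} is uniform on the 16
   subsets of N_o, and P_alpha[N(o) meets A] only depends on the shape of A.
   For the global comparison, fix N(u) at every vertex but one vertex p.  The
   event {o ~> dB_n}, seen as a function of N(p), either always holds or is
   exactly {N(p) meets A}, where A is the set of directions d for which the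
   event holds with N(p) = {d}: a path out of B_n may be cut so that it leaves
   p only once, through its last exit.  So replacing the law of N(p) by one
   dominating it on all the events {N(p) meets A} increases the probability of
   {o ~> dB_n}, and the two product laws are compared by changing the law at
   the vertices of the window one at a time. *)

Definition dirset_of_bits (t : bool * bool * bool * bool) : {set dir} :=
  [set d | match d with
           | North => t.1.1.1 | South => t.1.1.2 | East => t.1.2 | West => t.2
           end].

Definition bits_of_dirset (S : {set dir}) :=
  (North \in S, South \in S, East \in S, West \in S).

Lemma dirset_of_bitsK : cancel dirset_of_bits bits_of_dirset.
Proof. by case=> [[[a b] c] d]; rewrite /bits_of_dirset !inE. Qed.

Lemma bits_of_dirsetK : cancel bits_of_dirset dirset_of_bits.
Proof. by move=> S; apply/setP; case; rewrite inE. Qed.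

Lemma sum_dirset (V : nmodType) (F : {set dir} -> V) :
  \sum_(S : {set dir}) F S =
  \sum_(a : bool) \sum_(b : bool) \sum_(c : bool) \sum_(d : bool)
    F (dirset_of_bits (a, b, c, d)).
Proof.
rewrite (reindex dirset_of_bits); last first.
  by exists bits_of_dirset => S _; [apply: dirset_of_bitsK | apply: bits_of_dirsetK].
by rewrite !pair_bigA; apply: eq_bigr => -[[[a b] c] d].
Qed.

Lemma dirset_of_bits_meet a b c d a' b' c' d' :
  (dirset_of_bits (a, b, c, d) :&: dirset_of_bits (a', b', c', d') != set0) =
  [|| a && a', b && b', c && c' | d && d'].
Proof.
apply/set0Pn/idP => [[x]|].
  by rewrite !inE; case: x => /andP[] /= -> ->; rewrite ?orbT.
case/or4P => /andP[h h'];
  [exists North | exists South | exists East | exists West]; by rewrite !inE /= h h'.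
Qed.

Lemma Pcs_dirset_of_bits (R : realType) (alpha : R) t :
  Pcs alpha (dirset_of_bits t) =
  if t \in [:: (true, false, true, false); (true, false, false, true);
               (false, true, true, false); (false, true, false, true)] then alpha
  else if t \in [:: (true, true, false, false); (false, false, true, true)]
  then beta_of alpha else 0.
Proof.
rewrite /Pcs /is_corner /is_stick -!(can_eq bits_of_dirsetK).
by rewrite dirset_of_bitsK /bits_of_dirset !inE !orbA.
Qed.

Lemma Phalf_uniform (R : realType) (S : {set dir}) : Phalf S = 1 / 16 :> R.
Proof.
rewrite /Phalf (eq_bigr (fun=> 1 / 2)); last by move=> d _; case: ifP => _; lra.
rewrite prodr_const (_ : #|{: dir}| = 4%N); first lra.
by rewrite cardT enumT unlock.
Qed.

Lemma local_hit_Phalf_le_Pcs (R : realType) (alpha : R) (A : {set dir}) :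
  1 / 8 <= alpha -> alpha <= 1 / 4 ->
  local_hit Phalf A <= local_hit (Pcs alpha) A.
Proof.
move=> lo hi; rewrite /local_hit big_mkcond [leRHS]big_mkcond /= !sum_dirset.
rewrite -(bits_of_dirsetK A); case: (bits_of_dirset A) => [[[a b] c] d].
rewrite !big_bool !dirset_of_bits_meet !Phalf_uniform !Pcs_dirset_of_bits /beta_of.
by case: a; case: b; case: c; case: d => /=; lra.
Qed.

Lemma Phalf_ge0 (R : realType) (S : {set dir}) : 0 <= Phalf S :> R.
Proof. by rewrite Phalf_uniform; lra. Qed.

Lemma Pcs_ge0 (R : realType) (alpha : R) (S : {set dir}) :
  0 <= alpha -> alpha <= 1 / 4 -> 0 <= Pcs alpha S.
Proof. by move=> lo hi; rewrite /Pcs /beta_of; case: ifP => _; [|case: ifP => _]; lra. Qed.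

Lemma sum_Phalf (R : realType) : \sum_S Phalf S = 1 :> R.
Proof. by rewrite sum_dirset !big_bool !Phalf_uniform /=; lra. Qed.

Lemma sum_Pcs (R : realType) (alpha : R) : \sum_S Pcs alpha S = 1.
Proof. by rewrite sum_dirset !big_bool !Pcs_dirset_of_bits /= /beta_of; lra. Qed.

Definition reach_boundary (n : nat) (r : rel vtx) (x : vtx) : Prop :=
  exists s, [/\ path r x s, all (inB n) (belast x s) & inDB n (last x s)].

Definition reach_inside (n : nat) (r : rel vtx) (x y : vtx) : Prop :=
  exists s, [/\ path r x s, all (inB n) (belast x s) & last x s = y].

Lemma reach_boundary_sub n (r r' : rel vtx) x :
  subrel r r' -> reach_boundary n r x -> reach_boundary n r' x.
Proof. by move=> rr' [s [rs sB sD]]; exists s; split=> //; apply: sub_path rs. Qed.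

Lemma reach_boundary_cons n (r : rel vtx) x y :
  inB n x -> r x y -> reach_boundary n r y -> reach_boundary n r x.
Proof. by move=> xB rxy [s [rs sB sD]]; exists (y :: s); split=> //=; rewrite ?rxy ?xB. Qed.

Lemma reach_boundary_trans n (r : rel vtx) x y :
  reach_inside n r x y -> reach_boundary n r y -> reach_boundary n r x.
Proof.
case=> t [rt tB <-] [s [rs sB sD]]; exists (t ++ s); split.
- by rewrite cat_path rt.
- by rewrite belast_cat all_cat tB.
- by rewrite last_cat.
Qed.

Definition rewire (p : vtx) (e : rel vtx) (M : {set dir}) : rel vtx :=
  fun u v => if u == p then [exists d in M, v == vadd p (dvec d)] else e u v.

Lemma rewire_sub p e (M M' : {set dir}) :
  M \subset M' -> subrel (rewire p e M) (rewire p e M').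
Proof.
move=> MM' u v; rewrite /rewire; case: ifP => // _ /existsP[d /andP[dM vd]].
by apply/existsP; exists d; rewrite (subsetP MM').
Qed.

Lemma reach_boundary_rewire_sub n p e (M M' : {set dir}) x :
  M \subset M' -> reach_boundary n (rewire p e M) x -> reach_boundary n (rewire p e M') x.
Proof. by move=> MM'; apply: reach_boundary_sub; apply: rewire_sub. Qed.

Lemma rewire_away p e (M M' : {set dir}) u v :
  u != p -> rewire p e M u v -> rewire p e M' u v.
Proof. by rewrite /rewire => /negbTE ->. Qed.

(* Induction from the end of the path: only its last exit from [p] is kept. *)
Lemma path_rewire_last_exit n p e (N : {set dir}) s x :
  path (rewire p e N) x s -> all (inB n) (belast x s) -> inDB n (last x s) ->
  reach_boundary n (rewire p e set0) x \/
  exists2 d, d \in N &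
    reach_boundary n (rewire p e [set d]) p /\ reach_inside n (rewire p e set0) x p.
Proof.
elim: s x => [|y s IH] x /=; first by move=> _ _ xD; left; exists [::].
case/andP=> rxy rs /andP[xB sB] sD.
have [xp | xp] := eqVneq x p.
- right; move: rxy; rewrite xp {1}/rewire eqxx => /existsP[d0 /andP[d0N /eqP yd0]].
  have r0 : rewire p e [set d0] p y.
    by rewrite /rewire eqxx; apply/existsP; exists d0; rewrite inE yd0 !eqxx.
  case: (IH y rs sB sD) => [yD | [d dN [pD _]]].
    exists d0 => //; split; last by exists [::].
    apply: reach_boundary_cons (r0) _; first by rewrite -xp.
    exact: reach_boundary_rewire_sub (sub0set _) yD.
  by exists d => //; split=> //; exists [::].
- have r0 : rewire p e set0 x y by apply: rewire_away rxy.
  case: (IH y rs sB sD) => [yD | [d dN [pD [t [rt tB tp]]]]].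
    by left; apply: reach_boundary_cons r0 yD.
  right; exists d => //; split=> //.
  by exists (y :: t); split=> //=; rewrite ?r0 ?xB.
Qed.

Lemma reach_boundary_rewire_single n p e (N : {set dir}) x :
  reach_boundary n (rewire p e N) x ->
  reach_boundary n (rewire p e set0) x \/
  exists2 d, d \in N & reach_boundary n (rewire p e [set d]) x.
Proof.
case=> s [rs sB sD].
case: (path_rewire_last_exit rs sB sD) => [|[d dN [pD xp]]]; first by left.
right; exists d => //; apply: reach_boundary_trans pD.
case: xp => t [rt tB tp]; exists t; split=> //.
apply: sub_path rt; apply: rewire_sub; exact: sub0set.
Qed.

Lemma reach_boundary_rewire_hit n p e x :
  (forall N, reach_boundary n (rewire p e N) x) \/
  exists A : {set dir},
    forall N, reach_boundary n (rewire p e N) x <-> N :&: A != set0.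
Proof.
have [x0 | nx0] := pselect (reach_boundary n (rewire p e set0) x).
  by left=> N; apply: reach_boundary_rewire_sub x0; apply: sub0set.
right; exists [set d | `[< reach_boundary n (rewire p e [set d]) x >]] => N; split.
- case/reach_boundary_rewire_single => // -[d dN xd].
  by apply/set0Pn; exists d; rewrite !inE dN; apply/asboolP.
- case/set0Pn => d; rewrite !inE => /andP[dN /asboolP xd].
  by apply: reach_boundary_rewire_sub xd; rewrite sub1set.
Qed.

Definition resample n (w : config n) (b : box n) (N : {set dir}) : config n :=
  [ffun c => if c == b then N else w c].

Lemma resample_resample n (w : config n) b N M :
  resample (resample w b N) b M = resample w b M.
Proof. by apply/ffunP => c; rewrite !ffunE; case: eqP. Qed.

Lemma resample0_eq n (w : config n) b : (resample w b set0 == w) = (w b == set0).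
Proof.
apply/eqP/eqP => [<- | wb]; first by rewrite ffunE eqxx.
by apply/ffunP => c; rewrite ffunE; case: eqP => // ->.
Qed.

Lemma box_pos_inj n : injective (@box_pos n).
Proof.
move=> [x1 x2] [y1 y2] [e1 e2].
by congr pair; apply: val_inj => /=; lia.
Qed.

Lemma dirs_at_resample n (w : config n) b N u :
  dirs_at (resample w b N) u = if u == box_pos b then N else dirs_at w u.
Proof.
rewrite /dirs_at; case: pickP => [c /eqP <- | none].
  rewrite ffunE; have [-> | cb] := eqVneq c b; first by rewrite eqxx.
  by rewrite (inj_eq (@box_pos_inj n)) (negbTE cb).
by case: eqP => // ub; have := none b; rewrite ub eqxx.
Qed.

Lemma reaches_resample n (w : config n) b N :
  reaches (resample w b N) <-> reach_boundary n (rewire (box_pos b) (edge w) N) origin.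
Proof.
have E : edge (resample w b N) =2 rewire (box_pos b) (edge w) N.
  by move=> u v; rewrite /edge dirs_at_resample /rewire; case: eqP => [-> |].
by split=> -[s [rs sB sD]]; exists s; rewrite ?(eq_path E) // -(eq_path E).
Qed.

Definition reach_weight (R : realType) n (L : box n -> {set dir} -> R) : R :=
  \sum_(w : config n | `[< reaches w >]) \prod_(c : box n) L c (w c).

Lemma reach_weight_resample (R : realType) n (L : box n -> {set dir} -> R) b :
  reach_weight L =
  \sum_(w : config n | w b == set0)
     (\prod_(c | c != b) L c (w c)) *
     \sum_(N | `[< reaches (resample w b N) >]) L b N.
Proof.
rewrite /reach_weight big_mkcond (partition_big (fun w : config n => w b) predT) //=.
transitivity (\sum_(N : {set dir}) \sum_(w : config n | w b == set0)
   (if `[< reaches (resample w b N) >] then \prod_c L c (resample w b N c) else 0)).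
  apply: eq_bigr => N _.
  rewrite (reindex_onto (fun w => resample w b N) (fun w => resample w b set0)).
    by apply: eq_bigl => w; rewrite /= ffunE !eqxx /= resample_resample resample0_eq.
  by move=> w /eqP wb; apply/ffunP => c; rewrite !ffunE; case: eqP => // ->.
rewrite exchange_big; apply: eq_bigr => w _.
rewrite [X in _ = _ * X]big_mkcond mulr_sumr; apply: eq_bigr => N _.
case: asboolP => _; last by rewrite mulr0.
rewrite (bigD1 b) //= ffunE eqxx mulrC; congr (_ * _).
by apply: eq_bigr => c cb; rewrite ffunE (negbTE cb).
Qed.

Section LocalDomination.

Variables (R : realType) (P Q : {set dir} -> R).
Hypotheses (sumP : \sum_S P S = 1) (sumQ : \sum_S Q S = 1).
Hypothesis hitPQ : forall A, local_hit P A <= local_hit Q A.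

Lemma sum_reaches_resample_le n (w : config n) b :
  \sum_(N | `[< reaches (resample w b N) >]) P N <=
  \sum_(N | `[< reaches (resample w b N) >]) Q N.
Proof.
case: (reach_boundary_rewire_hit n (box_pos b) (edge w) origin) => [all_N | [A hitA]].
  have E (F : {set dir} -> R) :
      \sum_(N | `[< reaches (resample w b N) >]) F N = \sum_N F N.
    by apply: eq_bigl => N; apply/asboolP/reaches_resample.
  by rewrite !E sumP sumQ.
have E (F : {set dir} -> R) :
    \sum_(N | `[< reaches (resample w b N) >]) F N = local_hit F A.
  by apply: eq_bigl => N; apply/asboolP/idP => [/reaches_resample/hitA | /hitA/reaches_resample].
by rewrite !E.
Qed.

Lemma reach_weight_swap_le n (L1 L2 : box n -> {set dir} -> R) b :
  (forall c, c != b -> L1 c = L2 c) -> L1 b = P -> L2 b = Q ->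
  (forall c S, 0 <= L1 c S) -> reach_weight L1 <= reach_weight L2.
Proof.
move=> L12 L1b L2b L1_ge0.
rewrite (reach_weight_resample L1 b) (reach_weight_resample L2 b).
apply: ler_sum => w _; rewrite L1b L2b.
have -> : \prod_(c | c != b) L2 c (w c) = \prod_(c | c != b) L1 c (w c).
  by apply: eq_bigr => c cb; rewrite L12.
by apply: ler_wpM2l; [apply: prodr_ge0 | apply: sum_reaches_resample_le].
Qed.

Lemma prob_reach_le_of_local_hit_le n :
  (forall S, 0 <= P S) -> (forall S, 0 <= Q S) -> prob_reach P n <= prob_reach Q n.
Proof.
move=> P_ge0 Q_ge0.
pose mix (X : {set box n}) (c : box n) := if c \in X then Q else P.
suff mix_le k (X : {set box n}) :
    #|X| = k -> reach_weight (mix set0) <= reach_weight (mix X).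
  have := mix_le _ setT erefl; rewrite /reach_weight.
  by congr (_ <= _); apply: eq_bigr => w _; apply: eq_bigr => c _; rewrite /mix inE.
elim: k X => [|k IH] X cardX; first by rewrite (cards0_eq cardX).
have /set0Pn[b bX] : X != set0 by rewrite -card_gt0 cardX.
have cardXb : #|X :\ b| = k by move: cardX; rewrite (cardsD1 b) bX add1n => -[].
apply: le_trans (IH _ cardXb) _; apply: (reach_weight_swap_le (b := b)).
- by move=> c cb; rewrite /mix in_setD1 cb.
- by rewrite /mix in_setD1 eqxx.
- by rewrite /mix bX.
- by move=> c S; rewrite /mix; case: ifP.
Qed.

End LocalDomination.

Theorem mainTheorem14 (R : realType) (alpha : R) :
  1 / 8 <= alpha -> alpha <= 1 / 4 ->
  (forall A : {set dir}, local_hit Phalf A <= local_hit (Pcs alpha) A) /\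
  (forall n : nat, prob_reach Phalf n <= prob_reach (Pcs alpha) n).
Proof.
move=> lo hi; have hitPQ A := local_hit_Phalf_le_Pcs A lo hi.
split=> // n; apply: prob_reach_le_of_local_hit_le => //.
- exact: sum_Phalf.
- exact: sum_Pcs.
- exact: Phalf_ge0.
- by move=> S; apply: Pcs_ge0 => //; lra.
Qed.
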